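(* Let $G_1$ and $G_2$ be $\hbar$-perfect graphs, and let $G$ be the graph obtained from the disjoint union of $G_1$ and $G_2$ by adding all edges between a vertex of $G_1$ and a vertex of $G_2$ (the join). Then $G$ is $\hbar$-perfect.
   Context: A realization of a graph $G$ on $\{1,\dots,n\}$ is a tuple $(S_1,\dots,S_n)$ of Pauli strings (tensor products of matrices from $\{I,X,Y,Z\}$) of common length with $S_i,S_j$ anticommuting iff $i\sim j$ and commuting otherwise; every graph has one. For $w\in\mathbb{R}^n_{\ge0}$, $\beta(G,w)=\sup_\rho\sum_iw_i\operatorname{tr}(\rho S_i)^2$ over density matrices $\rho$ (independent of the realization), and $\alpha(G,w)=\max\{\sum_{i\in I}w_i: I\text{ independent set of }G\}$. $G$ is $\hbar$-perfect if $\beta(G,w)=\alpha(G,w)$ for all $w\in\mathbb{R}^n_{\ge0}$. *)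

From HB Require Import structures.
From mathcomp Require Import all_boot all_order all_algebra.
From mathcomp Require Import classical_sets reals.
From mathcomp Require Import complex mxtens.
Set Implicit Arguments. Unset Strict Implicit. Unset Printing Implicit Defensive.
Import Order.TTheory GRing.Theory Num.Theory.
Local Open Scope ring_scope.

Definition simple_graph (n : nat) (e : rel 'I_n) : Prop :=
  (forall i j, e i j = e j i) /\ (forall i, ~~ e i i).

Definition graph_join (n1 n2 : nat) (e1 : rel 'I_n1) (e2 : rel 'I_n2)
  : rel 'I_(n1 + n2) :=
  fun i j =>
    match split i, split j with
    | inl a, inl b => e1 a b
    | inr a, inr b => e2 a b
    | _, _ => true
    end.

Definition independent (n : nat) (e : rel 'I_n) (I : {set 'I_n}) : bool :=
  [forall i in I, forall j in I, ~~ e i j].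

Definition alpha (R : realType) (n : nat) (e : rel 'I_n) (w : 'I_n -> R) : R :=
  \big[Num.max/0]_(I : {set 'I_n} | independent e I) \sum_(i in I) w i.

Inductive pauli := PI | PX | PY | PZ.

Section Pauli.
Variable R : rcfType.
Local Notation C := R[i].

Definition pauli_mx (p : pauli) : 'M[C]_2 :=
  match p with
  | PI => \matrix_(a < 2, b < 2) (if a == b then 1 else 0)
  | PX => \matrix_(a < 2, b < 2) (if a == b then 0 else 1)
  | PY => \matrix_(a < 2, b < 2)
            (if a == b then 0 else if (a == 0 :> nat) then - 'i else 'i)
  | PZ => \matrix_(a < 2, b < 2)
            (if a == b then (if (a == 0 :> nat) then 1 else -1) else 0)
  end%C.

Fixpoint pauli_string_mx (s : seq pauli) : 'M[C]_(2 ^ size s) :=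
  match s return 'M[C]_(2 ^ size s) with
  | [::] => 1%:M
  | p :: s' => castmx (esym (expnS 2 (size s')), esym (expnS 2 (size s')))
                      (pauli_mx p *t pauli_string_mx s')
  end.

Definition pstr (m : nat) (t : m.-tuple pauli) : 'M[C]_(2 ^ m) :=
  castmx (congr1 (expn 2) (size_tuple t), congr1 (expn 2) (size_tuple t))
    (pauli_string_mx t).

Definition adjmx (N : nat) (A : 'M[C]_N) : 'M[C]_N := (map_mx Num.conj A)^T.

Definition density (N : nat) (rho : 'M[C]_N) : Prop :=
  [/\ adjmx rho = rho,
      (forall v : 'cV[C]_N, 0 <= ((map_mx Num.conj v)^T *m rho *m v) 0 0)
    & \tr rho = 1].

Definition realization (n m : nat) (e : rel 'I_n) (S : 'I_n -> m.-tuple pauli)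
  : Prop :=
  forall i j, if e i j then pstr (S i) *m pstr (S j) = - (pstr (S j) *m pstr (S i))
              else pstr (S i) *m pstr (S j) = pstr (S j) *m pstr (S i).
End Pauli.

(* beta(G, w) computed with the realization S:
   sup over density matrices rho of sum_i w_i tr(rho S_i)^2
   (tr(rho S_i) is real as rho, S_i are Hermitian; we take its real part). *)
Definition beta (R : realType) (n m : nat) (S : 'I_n -> m.-tuple pauli)
  (w : 'I_n -> R) : R :=
  sup [set x : R | exists rho : 'M[R[i]]_(2 ^ m), density rho /\
        x = \sum_i w i * (complex.Re (\tr (rho *m pstr R (S i)))) ^+ 2].

(* hbar-perfect: beta(G,w) = alpha(G,w) for all nonnegative weights.
   Since beta does not depend on the realization, we require it for every
   realization. *)
Definition hbar_perfect (R : realType) (n : nat) (e : rel 'I_n) : Prop :=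
  forall (m : nat) (S : 'I_n -> m.-tuple pauli), realization R e S ->
  forall w : 'I_n -> R, (forall i, 0 <= w i) -> beta S w = alpha e w.

(** Split the Pauli strings of the join into the families [P] of [G1] and
    [Q] of [G2]; every member of [P] anticommutes with every member of [Q].
    For a state [rho] with weighted sums [F1 = sum_i w_i <P_i>^2] and
    [F2 = sum_j w_j <Q_j>^2], the observables [X = sum_i w_i <P_i> P_i] and
    [Y = sum_j w_j <Q_j> Q_j] anticommute, so [(X + Y)^2 = X^2 + Y^2] and
    [(F1 + F2)^2 = <X + Y>^2 <= <X^2> + <Y^2>].  By Cauchy-Schwarz every state
    [sig] has [<X>_sig^2 <= F1 * beta(G1)], and since [<X^2>] is a convex
    combination of such squares (spectral theorem), [<X^2> <= F1 alpha(G1)];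
    likewise for [Y].  Hence [F1 + F2 <= max(alpha(G1), alpha(G2))], which is
    [alpha] of the join; the reverse inequality holds because [F1 + F2]
    dominates both [F1] and [F2]. *)

From HB Require Import structures.
From mathcomp Require Import all_boot all_order all_algebra.
From mathcomp Require Import classical_sets reals.
From mathcomp Require Import complex mxtens sesquilinear spectral.
From mathcomp Require Import ring lra.
Set Implicit Arguments. Unset Strict Implicit. Unset Printing Implicit Defensive.
Import Order.TTheory GRing.Theory Num.Theory.
Local Open Scope ring_scope.
Local Open Scope sesquilinear_scope.

Section RealInequalities.
Variable R : realFieldType.

Lemma sqr_mean_le_mean_sqr (I : finType) (q d : I -> R) :
  (forall k, 0 <= q k) -> \sum_k q k = 1 ->
  (\sum_k q k * d k) ^+ 2 <= \sum_k q k * d k ^+ 2.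
Proof.
move=> q0 q1; set m := \sum_k q k * d k.
have : 0 <= \sum_k q k * (d k - m) ^+ 2.
  by apply: sumr_ge0 => k _; rewrite mulr_ge0 ?sqr_ge0.
rewrite (eq_bigr (fun k => q k * d k ^+ 2 - (2 * m) * (q k * d k) + m ^+ 2 * q k));
  last by move=> k _; ring.
rewrite big_split /= sumrB -!mulr_sumr q1 -/m; set A := \sum_k _ => h; nra.
Qed.

Lemma weighted_cauchy_schwarz (I : finType) (w a b : I -> R) :
  (forall k, 0 <= w k) ->
  (\sum_k w k * a k * b k) ^+ 2 <=
    (\sum_k w k * a k ^+ 2) * (\sum_k w k * b k ^+ 2).
Proof.
move=> w0.
have : 0 <= \sum_i \sum_j w i * w j * (a i * b j - a j * b i) ^+ 2.
  by do 2!(apply: sumr_ge0 => ? _); rewrite mulr_ge0 ?sqr_ge0 ?mulr_ge0.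
rewrite (eq_bigr (fun i => \sum_j (w i * a i ^+ 2) * (w j * b j ^+ 2)
   + \sum_j (w i * b i ^+ 2) * (w j * a j ^+ 2)
   - 2 * \sum_j (w i * a i * b i) * (w j * a j * b j))); last first.
  move=> i _; rewrite mulr_sumr -big_split -sumrB /=.
  by apply: eq_bigr => j _; ring.
rewrite sumrB big_split /= -mulr_sumr -!big_distrlr /=.
set A := \sum_k _; set B := \sum_k _; set D := \sum_k _ => h; rewrite expr2; nra.
Qed.

End RealInequalities.

Section Expectation.
Variable R : realType.
Local Notation C := R[i].

Definition expect N (rho H : 'M[C]_N) : R := complex.Re (\tr (rho *m H)).

Lemma complex_real_Re (z : C) : z \is Num.real -> z = ((complex.Re z)%:C)%C.
Proof.
case: z => a b; rewrite realE !lecE /= => /orP[] /andP[/eqP hb _];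
  first [by rewrite hb | by rewrite -hb | (rewrite /= in hb; by rewrite hb)].
Qed.

Lemma complex_ge0_Re (z : C) :
  0 <= z -> z = ((complex.Re z)%:C)%C /\ 0 <= complex.Re z.
Proof.
move=> z0; split; first by apply: complex_real_Re; rewrite realE z0.
by move: z0; rewrite lecE => /andP[].
Qed.

Lemma Re_realM (r : R) (z : C) : complex.Re ((r%:C)%C * z) = r * complex.Re z.
Proof. by case: z => a b /=; rewrite mul0r subr0. Qed.

Lemma adjmxE N (A : 'M[C]_N) : adjmx A = A ^t*.
Proof. by rewrite /adjmx map_trmx. Qed.

Lemma adjmxD N (A B : 'M[C]_N) : adjmx (A + B) = adjmx A + adjmx B.
Proof. by apply/matrixP => i j; rewrite !mxE rmorphD. Qed.

Lemma adjmx_real_comb N (I : finType) (r : I -> R) (A : I -> 'M[C]_N) :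
  adjmx (\sum_i (r i)%:C%C *: A i) = \sum_i (r i)%:C%C *: adjmx (A i).
Proof.
apply/matrixP => a b; rewrite /adjmx !mxE !summxE rmorph_sum.
by apply: eq_bigr => i _; rewrite !mxE rmorphM; congr (_ * _); exact: conjc_real.
Qed.

Lemma adjmx_hermsymmx N (H : 'M[C]_N) : adjmx H = H -> H \is hermsymmx.
Proof. by move=> hH; apply/is_hermitianmxP; rewrite expr0 scale1r -adjmxE hH. Qed.

Lemma expectD N (rho A B : 'M[C]_N) : expect rho (A + B) = expect rho A + expect rho B.
Proof. by rewrite /expect mulmxDr mxtraceD raddfD. Qed.

Lemma expect_real_comb N (rho : 'M[C]_N) (I : finType) (r : I -> R)
    (A : I -> 'M[C]_N) :
  expect rho (\sum_i (r i)%:C%C *: A i) = \sum_i r i * expect rho (A i).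
Proof.
rewrite /expect mulmx_sumr (raddf_sum (@mxtrace _ N)) raddf_sum; apply: eq_bigr => i _.
by rewrite -scalemxAr /= mxtraceZ Re_realM.
Qed.

Lemma trmx_map_conj N (v : 'cV[C]_N) : (map_mx Num.conj v)^T = v^t*.
Proof. by rewrite map_trmx. Qed.

Lemma trmxC_mul m n p (A : 'M[C]_(m, n)) (B : 'M[C]_(n, p)) :
  (A *m B)^t* = B^t* *m A^t*.
Proof. by rewrite -!map_trmx map_mxM trmx_mul. Qed.

Lemma row_adjmx n (P : 'M[C]_n) k : (row k P)^t* = col k (P^t*).
Proof. by rewrite -map_trmx map_row tr_row map_trmx. Qed.

Lemma mulmx_col_entry m n p (A : 'M[C]_(m, n)) (B : 'M[C]_(n, p)) i k :
  (A *m col k B) i 0 = (A *m B) i k.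
Proof. by rewrite !mxE; apply: eq_bigr => j _; rewrite !mxE. Qed.

Lemma pure_density N (u : 'rV[C]_N) :
  (u *m u^t*) 0 0 = 1 -> density (u^t* *m u).
Proof.
move=> uu; split.
- by rewrite adjmxE trmxC_mul trmxCK.
- move=> v; rewrite trmx_map_conj mulmxA -trmxC_mul -mulmxA.
  rewrite !mxE big_ord1 !mxE mulrC; exact: mul_conjC_ge0.
- by rewrite mxtrace_mulC /mxtrace big_ord1 uu.
Qed.

Lemma unitary_row_norm N (P : 'M[C]_N) k :
  P *m P^t* = 1%:M -> (row k P *m (row k P)^t*) 0 0 = 1.
Proof.
by move=> PPt; rewrite row_adjmx mulmx_col_entry -row_mul PPt mxE mxE eqxx.
Qed.

Lemma exists_density N : (0 < N)%N -> exists rho : 'M[C]_N, density rho.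
Proof.
move=> hN; exists ((row (Ordinal hN) 1%:M)^t* *m row (Ordinal hN) 1%:M).
by apply/pure_density/unitary_row_norm; rewrite -map_trmx map_mx1 trmx1 mulmx1.
Qed.

Lemma mxtrace_row_unitary_diag N (P : 'M[C]_N) (d : 'rV[C]_N) k :
  P *m P^t* = 1%:M ->
  \tr ((row k P)^t* *m row k P *m (P^t* *m diag_mx d *m P)) = d 0 k.
Proof.
move=> PPt; have uPt : row k P *m P^t* = row k 1%:M by rewrite -row_mul PPt.
rewrite -!mulmxA mxtrace_mulC !mulmxA uPt -(mulmxA _ P).
rewrite -[P *m _](trmxCK) trmxC_mul trmxCK uPt.
rewrite /mxtrace big_ord1 row_adjmx mulmx_col_entry -!row_mul mxE.
by rewrite -map_trmx map_mx1 trmx1 mul1mx mulmx1 mxE eqxx mulr1n.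
Qed.

(* Diagonalising [H = P^* diag(d) P] turns [<H>_rho] and [<H^2>_rho] into
   the mean and the mean square of the eigenvalues [d] under the distribution
   [q k = (P rho P^* )_kk]; each eigenvalue is [<H>] of the eigenstate [row k P]. *)
Lemma expect_spectral N (H rho : 'M[C]_N) : adjmx H = H -> density rho ->
  exists (d q : 'I_N -> R),
  [/\ (forall k, 0 <= q k), \sum_k q k = 1,
      expect rho H = \sum_k q k * d k,
      expect rho (H *m H) = \sum_k q k * d k ^+ 2 &
      forall k, exists2 sig : 'M[C]_N, density sig & d k = expect sig H].
Proof.
move=> hH [_ rhoP rhoT].
have Hn : H \is normalmx := hermitian_normalmx (adjmx_hermsymmx hH).
set P := spectralmx H; set dd := spectral_diag H.
have Pu : P \is unitarymx := spectral_unitarymx H.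
have HE : H = P^t* *m diag_mx dd *m P.
  by rewrite {1}(orthomx_spectralP Hn) invmx_unitary.
have PPt : P *m P^t* = 1%:M by apply/unitarymxP.
have PtP : P^t* *m P = 1%:M by rewrite -invmx_unitary // mulVmx ?spectral_unit.
have ddr k : dd 0 k = ((complex.Re (dd 0 k))%:C)%C.
  apply: complex_real_Re.
  by have /mxOverP := hermitian_spectral_diag_real (adjmx_hermsymmx hH); apply.
set Q := P *m rho *m P^t*.
have Q0 k : 0 <= Q k k.
  have := rhoP ((row k P)^t*).
  by rewrite trmx_map_conj trmxCK row_adjmx mulmx_col_entry -!row_mul mxE.
pose q k := complex.Re (Q k k); pose d k := complex.Re (dd 0 k).
have Qr k : Q k k = ((q k)%:C)%C by have [] := complex_ge0_Re (Q0 k).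
have trQ A : \tr (P^t* *m A *m P *m rho) = \tr (A *m Q).
  by rewrite /Q -!mulmxA mxtrace_mulC !mulmxA.
exists d, q; split.
- by move=> k; have [] := complex_ge0_Re (Q0 k).
- have : \tr Q = 1 by rewrite /Q mxtrace_mulC mulmxA PtP mul1mx.
  by move=> /(congr1 (@complex.Re R)); rewrite /mxtrace raddf_sum.
- rewrite /expect mxtrace_mulC HE trQ mul_diag_mx /mxtrace raddf_sum.
  by apply: eq_bigr => k _; rewrite mxE Qr ddr -rmorphM /= mulrC.
- have HH : H *m H = P^t* *m (diag_mx dd *m diag_mx dd) *m P.
    by rewrite HE -!mulmxA (mulmxA P) PPt mul1mx.
  rewrite /expect mxtrace_mulC HH trQ -mulmxA !mul_diag_mx /mxtrace raddf_sum.
  by apply: eq_bigr => k _; rewrite 2!mxE Qr ddr -!rmorphM /=; ring.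
move=> k; set u := row k P.
exists (u^t* *m u); first exact/pure_density/unitary_row_norm.
by rewrite /expect HE mxtrace_row_unitary_diag.
Qed.

Lemma expect_sqr_le N (H rho : 'M[C]_N) : adjmx H = H -> density rho ->
  expect rho H ^+ 2 <= expect rho (H *m H).
Proof.
move=> hH hr; have [d [q [q0 q1 -> -> _]]] := expect_spectral hH hr.
exact: sqr_mean_le_mean_sqr.
Qed.

Lemma expect_mul_le N (H rho : 'M[C]_N) (K : R) : adjmx H = H -> density rho ->
  (forall sig : 'M[C]_N, density sig -> expect sig H ^+ 2 <= K) ->
  expect rho (H *m H) <= K.
Proof.
move=> hH hr hK; have [d [q [q0 q1 _ -> hd]]] := expect_spectral hH hr.
rewrite -[K]mul1r -q1 mulr_suml; apply: ler_sum => k _.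
by rewrite ler_wpM2l //; have [sig hsig ->] := hd k; exact: hK.
Qed.

Definition density_sup N (f : 'M[C]_N -> R) : R :=
  sup [set x | exists rho, density rho /\ x = f rho]%classic.

End Expectation.

Section WeightedObservable.
Variable R : realType.
Local Notation C := R[i].

Definition wsq_expect N (I : finType) (P : I -> 'M[C]_N) (w : I -> R)
    (rho : 'M[C]_N) : R :=
  \sum_i w i * expect rho (P i) ^+ 2.

Definition wsq_observable N (I : finType) (P : I -> 'M[C]_N) (w : I -> R)
    (rho : 'M[C]_N) : 'M[C]_N :=
  \sum_i (w i * expect rho (P i))%:C%C *: P i.

Variables (N : nat) (I : finType) (P : I -> 'M[C]_N) (w : I -> R).
Hypothesis P_herm : forall i, adjmx (P i) = P i.
Hypothesis w_ge0 : forall i, 0 <= w i.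

Lemma wsq_expect_ge0 rho : 0 <= wsq_expect P w rho.
Proof. by apply: sumr_ge0 => i _; rewrite mulr_ge0 ?sqr_ge0. Qed.

Lemma wsq_observable_herm rho : adjmx (wsq_observable P w rho) = wsq_observable P w rho.
Proof. by rewrite adjmx_real_comb; apply: eq_bigr => i _; rewrite P_herm. Qed.

Lemma expect_wsq_observable rho :
  expect rho (wsq_observable P w rho) = wsq_expect P w rho.
Proof. by rewrite expect_real_comb; apply: eq_bigr => i _; rewrite expr2 !mulrA. Qed.

(* Cauchy-Schwarz gives [<X>_sig^2 <= F(rho) F(sig)] for every state [sig]. *)
Lemma expect_sqr_wsq_observable_le rho (a : R) : density rho ->
  (forall sig, density sig -> wsq_expect P w sig <= a) ->
  expect rho (wsq_observable P w rho *m wsq_observable P w rho)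
    <= wsq_expect P w rho * a.
Proof.
move=> hrho ha; apply: expect_mul_le (wsq_observable_herm rho) hrho _ => sig hsig.
rewrite expect_real_comb.
apply: le_trans (weighted_cauchy_schwarz (fun i => expect rho (P i))
  (fun i => expect sig (P i)) w_ge0) _.
by rewrite ler_wpM2l ?wsq_expect_ge0 ?ha.
Qed.

End WeightedObservable.

Section AnticommutingFamilies.
Variable R : realType.
Local Notation C := R[i].

Lemma mulmx_sum_anticomm N (I J : finType) (A : I -> 'M[C]_N) (B : J -> 'M[C]_N) :
  (forall i j, A i *m B j = - (B j *m A i)) ->
  (\sum_i A i) *m (\sum_j B j) = - ((\sum_j B j) *m (\sum_i A i)).
Proof.
move=> hAB; rewrite !mulmx_suml -sumrN.
under eq_bigr do rewrite mulmx_sumr.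
under [RHS]eq_bigr do rewrite mulmx_sumr -sumrN.
rewrite exchange_big /=; apply: eq_bigr => i _; apply: eq_bigr => j _; exact: hAB.
Qed.

Lemma mulmxDD_anticomm N (X Y : 'M[C]_N) : X *m Y = - (Y *m X) ->
  (X + Y) *m (X + Y) = X *m X + Y *m Y.
Proof. by move=> XY; rewrite mulmxDl !mulmxDr XY addrA addrNK. Qed.

Variables (N : nat) (I J : finType) (P : I -> 'M[C]_N) (Q : J -> 'M[C]_N).
Variables (v : I -> R) (w : J -> R) (a b : R).
Hypotheses (P_herm : forall i, adjmx (P i) = P i) (Q_herm : forall j, adjmx (Q j) = Q j).
Hypothesis PQ_anticomm : forall i j, P i *m Q j = - (Q j *m P i).
Hypotheses (v_ge0 : forall i, 0 <= v i) (w_ge0 : forall j, 0 <= w j).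
Hypothesis P_bound : forall sig, density sig -> wsq_expect P v sig <= a.
Hypothesis Q_bound : forall sig, density sig -> wsq_expect Q w sig <= b.

Lemma wsq_expect_anticomm_le rho : density rho ->
  wsq_expect P v rho + wsq_expect Q w rho <= Num.max a b.
Proof.
move=> hrho; set F := wsq_expect P v rho; set G := wsq_expect Q w rho.
set X := wsq_observable P v rho; set Y := wsq_observable Q w rho.
have F0 : 0 <= F := wsq_expect_ge0 P v_ge0 rho.
have G0 : 0 <= G := wsq_expect_ge0 Q w_ge0 rho.
have a0 : 0 <= a := le_trans F0 (P_bound hrho).
have XY : X *m Y = - (Y *m X).
  apply: mulmx_sum_anticomm => i j.
  by rewrite -!scalemxAl -!scalemxAr PQ_anticomm !scalerN !scalerA mulrC.
have XYherm : adjmx (X + Y) = X + Y.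
  by rewrite adjmxD wsq_observable_herm ?wsq_observable_herm.
have sq : (F + G) ^+ 2 <= F * a + G * b.
  have := expect_sqr_le XYherm hrho.
  rewrite mulmxDD_anticomm // !expectD !expect_wsq_observable => /le_trans; apply.
  exact: lerD (expect_sqr_wsq_observable_le P_herm v_ge0 hrho P_bound)
              (expect_sqr_wsq_observable_le Q_herm w_ge0 hrho Q_bound).
have : F * a + G * b <= (F + G) * Num.max a b.
  by rewrite mulrDl lerD // ler_wpM2l // le_max lexx ?orbT.
have : 0 <= Num.max a b by rewrite le_max a0.
move: (Num.max a b) => M M0 hM; nra.
Qed.

End AnticommutingFamilies.

Section PauliHermitian.
Variable R : realType.

Lemma pauli_mx_herm p : adjmx (pauli_mx R p) = pauli_mx R p.
Proof.
case: p; apply/matrixP => a b; rewrite /adjmx !mxE;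
case: a => [[|[|a]] ?] //; case: b => [[|[|b]] ?] //=.
all: try by rewrite ?conjC0 ?conjC1.
all: try by rewrite conjCi.
- by rewrite -[RHS]conjCK conjCi.
- by rewrite rmorphN1.
Qed.

Lemma pauli_string_mx_herm s : adjmx (pauli_string_mx R s) = pauli_string_mx R s.
Proof.
elim: s => [|p s IH] /=; first by rewrite /adjmx map_mx1 trmx1.
rewrite /adjmx map_castmx trmx_cast /= (map_mxT Num.conj) trmx_tens.
by rewrite -!/(adjmx _) IH pauli_mx_herm.
Qed.

Lemma pstr_herm m (t : m.-tuple pauli) : adjmx (pstr R t) = pstr R t.
Proof.
by rewrite /pstr /adjmx map_castmx trmx_cast /= -/(adjmx _) pauli_string_mx_herm.
Qed.

End PauliHermitian.

Section DensitySup.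
Variables (R : realType) (N : nat).
Hypothesis N_gt0 : (0 < N)%N.
Implicit Types (f g : 'M[R[i]]_N -> R) (M : R).

Let density_values f := [set x | exists rho, density rho /\ x = f rho]%classic.

Lemma density_values_neq0 f : (density_values f !=set0)%classic.
Proof. by have [rho hrho] := exists_density R N_gt0; exists (f rho), rho. Qed.

Lemma density_sup_le f M :
  (forall rho, density rho -> f rho <= M) -> density_sup f <= M.
Proof. by move=> hM; apply: ge_sup (density_values_neq0 f) _ => x [rho [/hM hr ->]]. Qed.

Lemma density_sup_le_sup f g M :
  (forall rho, density rho -> f rho <= g rho) ->
  (forall rho, density rho -> g rho <= M) -> density_sup f <= density_sup g.
Proof.
move=> hfg hgM; have hsup : has_sup (density_values g).
  by split; [exact: density_values_neq0 | exists M => x [rho [/hgM hr ->]]].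
apply: density_sup_le => rho hrho; apply: le_trans (hfg _ hrho) _.
by apply: sup_upper_bound hsup _ _; exists rho.
Qed.

(* [sup] is [0] on sets without a supremum. *)
Lemma le_density_sup_or_eq0 f rho : density rho ->
  f rho <= density_sup f \/ density_sup f = 0.
Proof.
move=> hrho; case: (boolp.pselect (has_sup (density_values f))) => hsup.
  by left; apply: sup_upper_bound hsup _ _; exists rho.
by right; exact: sup_out.
Qed.

End DensitySup.

Lemma betaE (R : realType) n m (S : 'I_n -> m.-tuple pauli) (w : 'I_n -> R) :
  beta S w = density_sup (wsq_expect (fun i => pstr R (S i)) w).
Proof. by []. Qed.

Section GraphJoin.
Variable R : realType.
Variables (n1 n2 : nat) (e1 : rel 'I_n1) (e2 : rel 'I_n2).
Local Notation e := (graph_join e1 e2).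

Lemma independentP n (f : rel 'I_n) (I : {set 'I_n}) :
  reflect {in I &, forall i j, ~~ f i j} (independent f I).
Proof.
apply: (iffP forallP) => [hI i j iI jI | hI i].
  by have /implyP/(_ iI)/forallP/(_ j)/implyP := hI i; apply.
by apply/implyP => iI; apply/forallP => j; apply/implyP; exact: hI.
Qed.

Lemma join_ll a b : e (lshift n2 a) (lshift n2 b) = e1 a b.
Proof. by rewrite /graph_join !(unsplitK (inl _)). Qed.

Lemma join_rr a b : e (rshift n1 a) (rshift n1 b) = e2 a b.
Proof. by rewrite /graph_join !(unsplitK (inr _)). Qed.

Lemma join_lr a b : e (lshift n2 a) (rshift n1 b).
Proof. by rewrite /graph_join (unsplitK (inl _)) (unsplitK (inr _)). Qed.

Lemma alpha_ge0 n (f : rel 'I_n) (w : 'I_n -> R) : 0 <= alpha f w.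
Proof. exact: bigmax_ge_id. Qed.

Lemma le_alpha n (f : rel 'I_n) (w : 'I_n -> R) I :
  independent f I -> \sum_(i in I) w i <= alpha f w.
Proof. by move=> hI; apply: (@le_bigmax_cond _ _ _ 0 I (independent f)). Qed.

Lemma alpha_eq0 n (f : rel 'I_n) (w : 'I_n -> R) :
  (forall i, ~~ f i i) -> (forall i, 0 <= w i) -> alpha f w = 0 -> forall i, w i = 0.
Proof.
move=> irr w0 a0 i; apply/eqP; rewrite eq_le w0 andbT -a0.
have hI : independent f [set i].
  by apply/independentP => j k /set1P -> /set1P ->; exact: irr.
by have := le_alpha w hI; rewrite big_set1.
Qed.

Variable w : 'I_(n1 + n2) -> R.
Let w1 a := w (lshift n2 a).
Let w2 b := w (rshift n1 b).

(* An independent set of the join lies entirely in one block. *)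
Lemma alpha_join_le : alpha e w <= Num.max (alpha e1 w1) (alpha e2 w2).
Proof.
apply: bigmax_le; first by rewrite le_max alpha_ge0.
move=> I /independentP hI; set I1 := [set a | lshift n2 a \in I].
set I2 := [set b | rshift n1 b \in I].
have hI1 : independent e1 I1.
  by apply/independentP => a b; rewrite !inE -join_ll; exact: hI.
have hI2 : independent e2 I2.
  by apply/independentP => a b; rewrite !inE -join_rr; exact: hI.
rewrite big_mkcond big_split_ord /= -!big_mkcond /=.
have -> : \sum_(a < n1 | lshift n2 a \in I) w (lshift n2 a) = \sum_(a in I1) w1 a.
  by apply: eq_bigl => a; rewrite inE.
have -> : \sum_(b < n2 | rshift n1 b \in I) w (rshift n1 b) = \sum_(b in I2) w2 b.
  by apply: eq_bigl => b; rewrite inE.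
have [->|[a aI1]] := set_0Vmem I1.
  by rewrite big_set0 add0r le_max (le_alpha w2 hI2) orbT.
have [->|[b bI2]] := set_0Vmem I2.
  by rewrite big_set0 addr0 le_max (le_alpha w1 hI1).
by move: aI1 bI2; rewrite !inE => aI bI; have := hI _ _ aI bI; rewrite join_lr.
Qed.

Lemma le_alpha_join : Num.max (alpha e1 w1) (alpha e2 w2) <= alpha e w.
Proof.
rewrite ge_max; apply/andP; split; apply: bigmax_le; try exact: alpha_ge0.
  move=> I1 /independentP hI1; have hI : independent e [set lshift n2 a | a in I1].
    apply/independentP => _ _ /imsetP[a aI ->] /imsetP[b bI ->].
    by rewrite join_ll; exact: hI1.
  by have := le_alpha w hI; rewrite big_imset // => x y _ _; apply: lshift_inj.
move=> I2 /independentP hI2; have hI : independent e [set rshift n1 b | b in I2].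
  apply/independentP => _ _ /imsetP[a aI ->] /imsetP[b bI ->].
  by rewrite join_rr; exact: hI2.
by have := le_alpha w hI; rewrite big_imset // => x y _ _; apply: rshift_inj.
Qed.

Lemma alpha_join : alpha e w = Num.max (alpha e1 w1) (alpha e2 w2).
Proof. by apply/le_anti; rewrite alpha_join_le le_alpha_join. Qed.

End GraphJoin.

Section JoinRealization.
Variables (R : realType) (n1 n2 m : nat) (e1 : rel 'I_n1) (e2 : rel 'I_n2).
Variable S : 'I_(n1 + n2) -> m.-tuple pauli.
Hypothesis hS : realization R (graph_join e1 e2) S.

Lemma realization_lshift : realization R e1 (fun a => S (lshift n2 a)).
Proof. by move=> a b; have := hS (lshift n2 a) (lshift n2 b); rewrite join_ll. Qed.

Lemma realization_rshift : realization R e2 (fun b => S (rshift n1 b)).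
Proof. by move=> a b; have := hS (rshift n1 a) (rshift n1 b); rewrite join_rr. Qed.

Lemma realization_join_anticomm a b :
  pstr R (S (lshift n2 a)) *m pstr R (S (rshift n1 b)) =
  - (pstr R (S (rshift n1 b)) *m pstr R (S (lshift n2 a))).
Proof. by have := hS (lshift n2 a) (rshift n1 b); rewrite join_lr. Qed.

End JoinRealization.

Lemma wsq_expect_le_alpha (R : realType) n m (e : rel 'I_n)
    (S : 'I_n -> m.-tuple pauli) (w : 'I_n -> R) :
  (forall i, ~~ e i i) -> (forall i, 0 <= w i) -> beta S w = alpha e w ->
  forall rho, density rho -> wsq_expect (fun i => pstr R (S i)) w rho <= alpha e w.
Proof.
move=> irr w0 hbeta rho hrho; rewrite -hbeta betaE.
have [//|sup0] := le_density_sup_or_eq0 (wsq_expect (fun i => pstr R (S i)) w) hrho.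
have wz := alpha_eq0 irr w0 (etrans (esym hbeta) sup0).
by rewrite sup0 /wsq_expect big1 // => i _; rewrite wz mul0r.
Qed.

Theorem mainTheorem3 (R : realType) (n1 n2 : nat)
  (e1 : rel 'I_n1) (e2 : rel 'I_n2) :
  simple_graph e1 -> simple_graph e2 ->
  hbar_perfect R e1 -> hbar_perfect R e2 ->
  hbar_perfect R (graph_join e1 e2).
Proof.
move=> [_ irr1] [_ irr2] hp1 hp2 m S hS w w0.
pose S1 a := S (lshift n2 a); pose S2 b := S (rshift n1 b).
pose w1 a := w (lshift n2 a); pose w2 b := w (rshift n1 b).
have w10 a : 0 <= w1 a := w0 _.
have w20 b : 0 <= w2 b := w0 _.
have hb1 := hp1 m S1 (realization_lshift hS) w1 w10.
have hb2 := hp2 m S2 (realization_rshift hS) w2 w20.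
pose F := wsq_expect (fun i => pstr R (S i)) w.
pose F1 := wsq_expect (fun a => pstr R (S1 a)) w1.
pose F2 := wsq_expect (fun b => pstr R (S2 b)) w2.
have FE rho : F rho = F1 rho + F2 rho by rewrite /F /wsq_expect big_split_ord.
have F_le rho : density rho -> F rho <= Num.max (alpha e1 w1) (alpha e2 w2).
  move=> hrho; rewrite FE; apply: wsq_expect_anticomm_le hrho => //.
  - by move=> a; exact: pstr_herm.
  - by move=> b; exact: pstr_herm.
  - exact: realization_join_anticomm hS.
  - exact: wsq_expect_le_alpha.
  - exact: wsq_expect_le_alpha.
have m_gt0 : (0 < 2 ^ m)%N by rewrite expn_gt0.
rewrite alpha_join betaE; apply/le_anti; rewrite density_sup_le //=.
rewrite ge_max -hb1 -hb2 !betaE.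
by rewrite !(density_sup_le_sup m_gt0 _ F_le) // => rho _;
  rewrite FE ?lerDl ?lerDr wsq_expect_ge0.
Qed.
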